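(* (i) Let $p_{1}, p_{2}, r \in \mathbb N$ and $m \in \mathbb N_{0}$. Then \begin{align*} T(p_{1},p_{2},m,1,r,1) &=\sum_{i=1}^{m}\frac{(-1)^{m-i}}{r^{m-i+1}}S_{p_{1},p_{2},i}^{+,+,-} +\frac{(-1)^{m+r}}{r^{m}}\left(S_{p_{1},p_{2},1}^{+,+,-}-S_{p_{1},p_{2}+1}^{+,-}-S_{p_{2},p_{1}+1}^{+,-}\right) +\frac{(-1)^{m+r}}{r^{m}}\overline{\zeta}(p_{1}+p_{2}+1)\\ &\quad +\sum_{j=1}^{r-1}\frac{(-1)^{r+m-j}}{r^{m}}S(0,p_{1}+p_{2}+1,1,j,1) +\sum_{j=1}^{r-1}\frac{(-1)^{r+m-1-j}}{r^{m}}\big(S(p_{1},p_{2},1,j,1)+S(p_{2},p_{1},1,j,1)\big)\,. \end{align*} (ii) Let $p_{1}, m, r \in \mathbb N$, $p_{2} \in \mathbb N_{0}$ with $m \geq p_{2}+1$. Then \begin{align*} T(p_{1},-p_{2},m,1,r,1)=\frac{1}{p_{2}+1}\sum_{\ell=0}^{p_{2}} \binom{p_{2}+1}{\ell}B_{\ell}^{+}S(p_{1},m-p_{2}-1+\ell,1,r,1)\,. \end{align*} (iii) Let $m, r \in \mathbb N$, $p_{1}, p_{2} \in \mathbb N_{0}$ with $m \geq p_{1}+p_{2}+2$. Then \begin{align*} T(-p_{1},-p_{2},m,1,r,1)=\frac{1}{(p_{1}+1)(p_{2}+1)}\sum_{\ell_{1}=0}^{p_{1}} \sum_{\ell_{2}=0}^{p_{2}}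 \binom{p_{1}+1}{\ell_{1}}\binom{p_{2}+1}{\ell_{2}}B_{\ell_{1}}^{+}B_{\ell_{2}}^{+}\,S(0,m-p_{1}-p_{2}-1+\ell_{1}+\ell_{2},1,r,1)\,. \end{align*}
   Context: $H_n^{(q)}=\sum_{j=1}^n j^{-q}$ for $q\in\mathbb N$; for an integer $q\ge0$, $H_n^{(-q)}=\sum_{\ell=1}^n\ell^q$ (so $H_n^{(0)}=n$). For $q,q_1,q_2\in\mathbb Z$, $t,r\in\mathbb N$ and integer exponent $m\ge0$: $S(q,m,t,r,1):=\sum_{n=1}^\infty\frac{(-1)^{n+1}H_n^{(q)}}{n^{m}(n+r)^{t}}$ and $T(q_{1},q_{2},m,t,r,1):=\sum_{n=1}^\infty\frac{(-1)^{n+1}H_n^{(q_{1})}H_n^{(q_{2})}}{n^{m}(n+r)^{t}}$. $S_{p,q}^{+,-}:=\sum_{n\ge1}(-1)^{n-1}H_n^{(p)}/n^q$, $S_{p_1,p_2,q}^{+,+,-}:=\sum_{n\ge1}(-1)^{n-1}H_n^{(p_1)}H_n^{(p_2)}/n^q$, $\overline{\zeta}(s)=\sum_{n\ge1}(-1)^{n-1}n^{-s}$. Bernoulli numbers $B_j^{+}$: $\frac{x}{1-e^{-x}}=\sum_{j\ge0}B_j^{+}\frac{x^j}{j!}$. Empty sums are $0$. *)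

From Stdlib Require Import Reals Lra Lia ZArith List.
From Coquelicot Require Import Coquelicot.
Open Scope R_scope.

Definition H (q : Z) (n : nat) : R :=
  sum_n_m (fun j : nat => powerRZ (INR j) (- q)) 1 n.

(* Summands, indexed so that index k corresponds to n = k+1 (series start at n = 1);
   (-1)^{n+1} = (-1)^k. *)
Definition S_term (q : Z) (m t r : nat) (k : nat) : R :=
  (-1) ^ k * H q (S k) / (INR (S k) ^ m * (INR (S k) + INR r) ^ t).

Definition T_term (q1 q2 : Z) (m t r : nat) (k : nat) : R :=
  (-1) ^ k * H q1 (S k) * H q2 (S k) / (INR (S k) ^ m * (INR (S k) + INR r) ^ t).

Definition Ssum (q : Z) (m t r : nat) : R := Series (S_term q m t r).
Definition Tsum (q1 q2 : Z) (m t r : nat) : R := Series (T_term q1 q2 m t r).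

Definition Spm (p q : nat) : R :=
  Series (fun k => (-1) ^ k * H (Z.of_nat p) (S k) / INR (S k) ^ q).

Definition Sppm (p1 p2 q : nat) : R :=
  Series (fun k => (-1) ^ k * H (Z.of_nat p1) (S k) * H (Z.of_nat p2) (S k) / INR (S k) ^ q).

Definition zetabar (s : nat) : R :=
  Series (fun k => (-1) ^ k / INR (S k) ^ s).

(* Bernoulli numbers B_j^+ defined by x/(1-e^{-x}) = sum_j B_j^+ x^j/j!.
   Comparing coefficients in (x/(1-e^{-x})) * ((1-e^{-x})/x) = 1, with
   (1-e^{-x})/x = sum_k (-1)^k x^k/(k+1)!, gives for n >= 1:
     sum_{j=0}^{n} C(n+1,j) (-1)^{n-j} B_j^+ = 0,  B_0^+ = 1,
   i.e. B_n^+ = - (1/(n+1)) sum_{j<n} C(n+1,j) (-1)^{n-j} B_j^+. *)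
Fixpoint Bplus_list (n : nat) : list R :=
  match n with
  | O => 1 :: nil
  | S k =>
      let l := Bplus_list k in
      l ++ (- (sum_f_R0 (fun j => Binomial.C (S (S k)) j * (-1) ^ (S k - j) * nth j l 0) k)
             / INR (S (S k))) :: nil
  end.

Definition Bplus (n : nat) : R := nth n (Bplus_list n) 0.

From Stdlib Require Import Reals ZArith Lra Lia List.
From Coquelicot Require Import Coquelicot.
Open Scope R_scope.

(* All series are alternating series whose terms factor as [h_k b_k] with [h]
   nondecreasing and of size at most [(H_k^(1))^2], [b] nonincreasing and
   [O(1/k)]; since [sum (h_(k+1) - h_k) b_(k+1)] converges, Abel summation gives
   convergence.

   (i) The partial fraction expansion of [1/(n^m (n+r))] reduces [T(p1,p2,m,1,r,1)]
   to the [S_(p1,p2,i)^(+,+,-)] and to [U r := T(p1,p2,0,1,r,1)]. Shifting the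
   index of [U (r+1)] and using [H_(n-1) = H_n - n^(-p)] gives
   [U (r+1) = S(p1,p2,1,r,1) + S(p2,p1,1,r,1) - S(0,p1+p2+1,1,r,1) - U r], which
   unrolls down to [U 0 = S_(p1,p2,1)^(+,+,-)].

   (ii), (iii) Faulhaber's formula
   [H_n^(-p) = 1/(p+1) sum_l C(p+1,l) B_l^+ n^(p+1-l)], which follows from the
   recurrence defining [B^+], turns each summand into a finite combination of
   summands of [S]. *)

(* Equations produced by Coquelicot's generic lemmas (e.g. with a sum on the left)
   live in the carrier of a Coquelicot structure, not syntactically in [R];
   [ring], [field] and [lra] need them at [R]. *)
Ltac eqR := lazymatch goal with |- @eq _ ?a ?b => change (@eq R a b) end.

Lemma sumR_Sm (a : nat -> R) n m :
  (n <= S m)%nat -> sum_n_m a n (S m) = sum_n_m a n m + a (S m).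
Proof. exact (sum_n_Sm a n m). Qed.

Lemma sumR_Sn (a : nat -> R) n m :
  (n <= m)%nat -> sum_n_m a n m = a n + sum_n_m a (S n) m.
Proof. exact (sum_Sn_m a n m). Qed.

Lemma sumR_empty (a : nat -> R) n m : (m < n)%nat -> sum_n_m a n m = 0.
Proof. exact (sum_n_m_zero a n m). Qed.

Lemma sumR_plus (u v : nat -> R) n m :
  sum_n_m (fun k => u k + v k) n m = sum_n_m u n m + sum_n_m v n m.
Proof. exact (sum_n_m_plus u v n m). Qed.

Lemma sumR_mult_l (c : R) (u : nat -> R) n m :
  sum_n_m (fun k => c * u k) n m = c * sum_n_m u n m.
Proof. exact (sum_n_m_mult_l c u n m). Qed.

Lemma sumR_mult_r (c : R) (u : nat -> R) n m :
  sum_n_m (fun k => u k * c) n m = sum_n_m u n m * c.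
Proof. exact (sum_n_m_mult_r c u n m). Qed.

Lemma sumR_ext (a b : nat -> R) n m :
  (forall k, (n <= k <= m)%nat -> a k = b k) -> sum_n_m a n m = sum_n_m b n m.
Proof. exact (sum_n_m_ext_loc a b n m). Qed.

Lemma sumR_minus (u v : nat -> R) n m :
  sum_n_m (fun k => u k - v k) n m = sum_n_m u n m - sum_n_m v n m.
Proof.
  rewrite (sumR_ext _ (fun k => u k + -1 * v k)). 2: { intros k Hk. ring. }
  rewrite sumR_plus, sumR_mult_l. eqR. ring.
Qed.

Lemma is_series_0 : is_series (fun _ : nat => 0) 0.
Proof.
  enough (Hs : is_lim_seq (sum_n (fun _ : nat => 0)) 0) by exact Hs.
  apply (is_lim_seq_ext (fun _ => 0)); [|apply is_lim_seq_const].
  intros n. rewrite sum_n_const. ring.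
Qed.

Lemma is_series_sum_n_m (f : nat -> nat -> R) (l : nat -> R) a b :
  (forall i, (a <= i <= b)%nat -> is_series (f i) (l i)) ->
  is_series (fun k => sum_n_m (fun i => f i k) a b) (sum_n_m l a b).
Proof.
  intros Hf. destruct (le_lt_dec a b) as [Hab | Hba].
  - replace b with (a + (b - a))%nat in * by lia. remember (b - a)%nat as d. clear Heqd Hab.
    induction d as [|d IH].
    + rewrite Nat.add_0_r in *. rewrite sum_n_n.
      apply (is_series_ext (f a)); [intros; now rewrite sum_n_n | apply Hf; lia].
    + rewrite Nat.add_succ_r, sumR_Sm by lia.
      apply (is_series_ext (fun k => sum_n_m (fun i => f i k) a (a + d) + f (S (a + d)) k)).
      * intros k. now rewrite sumR_Sm by lia.
      * apply (is_series_plus (V := R_NormedModule)); [apply IH; intros i Hi; apply Hf | apply Hf]; lia.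
  - rewrite sumR_empty by lia.
    apply (is_series_ext (fun _ => 0)); [intros; now rewrite sumR_empty | exact is_series_0].
Qed.

Lemma H_0 q : H q 0 = 0.
Proof. exact (sum_n_m_zero _ 1 0 (Nat.lt_0_1)). Qed.

Lemma H_S q n : H q (S n) = H q n + powerRZ (INR (S n)) (- q).
Proof. exact (sum_n_Sm _ 1 n (le_n_S _ _ (Nat.le_0_l n))). Qed.

Lemma Hpos_S p n : H (Z.of_nat p) (S n) = H (Z.of_nat p) n + / INR (S n) ^ p.
Proof. now rewrite H_S, powerRZ_neg', <- pow_powerRZ. Qed.

Lemma Hneg_S p n : H (- Z.of_nat p) (S n) = H (- Z.of_nat p) n + INR (S n) ^ p.
Proof. now rewrite H_S, Z.opp_involutive, <- pow_powerRZ. Qed.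

Lemma H1_S n : H 1 (S n) = H 1 n + / INR (S n).
Proof. rewrite <- (pow_1 (INR (S n))). exact (Hpos_S 1 n). Qed.

Lemma H0_INR n : H 0 n = INR n.
Proof.
  induction n as [|n IH]; [apply H_0|].
  rewrite H_S, IH, S_INR. simpl. ring.
Qed.

Lemma inv_pow_INR_S_bounds p n :
  (1 <= p)%nat -> 0 < / INR (S n) ^ p <= / INR (S n).
Proof.
  intros Hp. assert (Hn : 1 <= INR (S n)) by (apply (le_INR 1); lia).
  split.
  - apply Rinv_0_lt_compat, pow_lt. lra.
  - apply Rinv_le_contravar; [lra|].
    rewrite <- (pow_1 (INR (S n))) at 1. now apply Rle_pow.
Qed.

Lemma Hpos_ge0 p n : 0 <= H (Z.of_nat p) n.
Proof.
  induction n as [|n IH]; [rewrite H_0; lra|].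
  rewrite Hpos_S. assert (0 < / INR (S n) ^ p).
  { apply Rinv_0_lt_compat, pow_lt, lt_0_INR. lia. }
  lra.
Qed.

Lemma Hpos_le_H1 p n : (1 <= p)%nat -> H (Z.of_nat p) n <= H 1 n.
Proof.
  intros Hp. induction n as [|n IH]; [rewrite !H_0; lra|].
  rewrite Hpos_S, H1_S. pose proof (inv_pow_INR_S_bounds p n Hp). lra.
Qed.

Lemma H1_ge1 n : 1 <= H 1 (S n).
Proof.
  induction n as [|n IH].
  - rewrite H1_S, H_0. simpl. lra.
  - rewrite H1_S. assert (0 < / INR (S (S n))) by (apply Rinv_0_lt_compat, lt_0_INR; lia).
    lra.
Qed.

(** * Alternating series *)

Lemma sum_n_alt_sign_bound n : Rabs (sum_n (fun k => (-1) ^ k) n) <= 1.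
Proof.
  assert (E : sum_n (fun k => (-1) ^ k) n = (1 + (-1) ^ n) / 2).
  { induction n as [|n IH]; [rewrite sum_O; simpl; eqR; field|].
    rewrite sum_Sn, IH. simpl. change (plus ?x ?y) with (x + y). field. }
  rewrite E. pose proof (pow_1_abs n) as Habs.
  pose proof (Rle_abs ((-1) ^ n)). pose proof (Rle_abs (- (-1) ^ n)).
  rewrite Rabs_Ropp in *. apply Rabs_le. lra.
Qed.

Lemma is_series_telescoping (a : nat -> R) (l : R) :
  is_lim_seq a l -> is_series (fun k => a (S k) - a k) (l - a O).
Proof.
  intros Ha.
  enough (Hs : is_lim_seq (sum_n (fun k => a (S k) - a k)) (l - a O)) by exact Hs.
  apply (is_lim_seq_ext (fun N => a (S N) - a O)).
  - induction n as [|n IH]; [now rewrite sum_O|].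
    rewrite sum_Sn, <- IH. change (plus ?x ?y) with (x + y). ring.
  - apply is_lim_seq_minus'; [now apply (is_lim_seq_incr_1 a l) | apply is_lim_seq_const].
Qed.

Lemma ex_series_le_telescoping (a c : nat -> R) :
  (forall k, 0 <= a k <= c k - c (S k)) -> (forall k, 0 <= c k) -> ex_series a.
Proof.
  intros Ha Hc.
  assert (Hpart : forall N, sum_n a N <= c O - c (S N)).
  { induction N as [|N IH]; rewrite ?sum_O, ?sum_Sn; [apply Ha|].
    change (plus ?x ?y) with (x + y). pose proof (Ha (S N)). lra. }
  destruct (ex_finite_lim_seq_incr (sum_n a) (c O)) as [l Hl].
  - intros N. rewrite sum_Sn. change (plus ?x ?y) with (x + y). pose proof (Ha (S N)). lra.
  - intros N. pose proof (Hpart N). pose proof (Hc (S N)). lra.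
  - now exists l.
Qed.

Section AlternatingMonotoneProduct.

Variables h b : nat -> R.
Hypothesis h_incr : forall k, 0 <= h k <= h (S k).
Hypothesis b_decr : forall k, 0 <= b (S k) <= b k.
Hypothesis b_lim : is_lim_seq b 0.
Hypothesis increments_summable : ex_series (fun k => (h (S k) - h k) * b (S k)).

Let v k := (h (S k) - h k) * b (S k).

Let b_ge0 k : 0 <= b k.
Proof. destruct k; [pose proof (b_decr O) | pose proof (b_decr k)]; lra. Qed.

Let v_ge0 k : 0 <= v k.
Proof. apply Rmult_le_pos; [pose proof (h_incr k) | apply b_ge0]; lra. Qed.

Let h_mono M d : h M <= h (M + d).
Proof.
  induction d as [|d IH]; [rewrite Nat.add_0_r; lra|].
  rewrite Nat.add_succ_r. pose proof (h_incr (M + d)). lra.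
Qed.

Lemma weighted_increment_le M d :
  (h (M + S d) - h M) * b (M + S d) <= sum_n_m v M (M + d).
Proof.
  induction d as [|d IH].
  - rewrite Nat.add_0_r, sum_n_n, Nat.add_1_r. apply Rle_refl.
  - pose proof (h_mono M (S d)). rewrite !Nat.add_succ_r in *.
    rewrite sumR_Sm by lia. unfold v at 2.
    pose proof (h_incr (S (M + d))). pose proof (b_decr (S (M + d))).
    assert ((h (S (M + d)) - h M) * b (S (S (M + d)))
            <= (h (S (M + d)) - h M) * b (S (M + d))) by (apply Rmult_le_compat_l; lra).
    lra.
Qed.

(* Split [h n b n] at a late index [M]: the part [h M * b n] is killed by
   [b n -> 0], the rest is bounded by a Cauchy tail of the increment series. *)
Lemma is_lim_seq_mono_product : is_lim_seq (fun k => h k * b k) 0.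
Proof.
  apply is_lim_seq_spec. intros eps.
  destruct (Cauchy_ex_series _ increments_summable (pos_div_2 eps)) as [M HM].
  assert (HhM : 0 < h M + 1) by (pose proof (h_incr M); lra).
  assert (Hdelta : 0 < eps / 2 / (h M + 1)) by (apply Rdiv_lt_0_compat; [apply is_pos_div_2 | lra]).
  destruct (proj2 (is_lim_seq_spec b 0) b_lim (mkposreal _ Hdelta)) as [N HN].
  exists (S (M + N)). intros n Hn. simpl in HN.
  replace n with (M + S (n - S M))%nat by lia.
  set (n' := (M + S (n - S M))%nat).
  pose proof (weighted_increment_le M (n - S M)) as Hw. fold n' in Hw.
  rewrite Rmult_minus_distr_r in Hw.
  specialize (HM M (M + (n - S M))%nat (le_n M) ltac:(lia)).
  assert (Htail : sum_n_m v M (M + (n - S M)) < eps / 2)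
    by (eapply Rle_lt_trans; [apply Rle_abs | exact HM]).
  specialize (HN n' ltac:(unfold n'; lia)). rewrite Rminus_0_r, Rabs_right in HN by apply Rle_ge, b_ge0.
  assert (Hlow : 0 <= h n' * b n') by (apply Rmult_le_pos; [apply h_incr | apply b_ge0]).
  assert (Hhead : h M * b n' < eps / 2).
  { apply Rle_lt_trans with ((h M + 1) * b n').
    - pose proof (b_ge0 n'). nra.
    - apply (Rmult_lt_reg_r (/ (h M + 1))); [now apply Rinv_0_lt_compat|].
      replace ((h M + 1) * b n' * / (h M + 1)) with (b n') by (field; lra). exact HN. }
  rewrite Rminus_0_r, Rabs_right by lra. lra.
Qed.

Lemma ex_series_alt_mono_product : ex_series (fun k => (-1) ^ k * (h k * b k)).
Proof.
  set (a k := h k * b k). set (u k := h k * (b k - b (S k))).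
  assert (Hu : ex_series u).
  { apply (ex_series_ext (fun k => v k - (a (S k) - a k))).
    - intros k. unfold u, v, a. eqR. ring.
    - apply (ex_series_minus (V := R_NormedModule)); [exact increments_summable|].
      eexists. apply is_series_telescoping, is_lim_seq_mono_product. }
  apply (ex_series_ext (fun k => scal (a k) ((-1) ^ k))).
  { intros k. change (a k * (-1) ^ k = (-1) ^ k * (h k * b k)). unfold a. ring. }
  apply partial_summation_R.
  - exists 1. apply sum_n_alt_sign_bound.
  - exact is_lim_seq_mono_product.
  - apply (@ex_series_le R_AbsRing R_CompleteNormedModule _ (fun k => u k + v k)).
    + intros k. change (Rabs (Rabs (a (S k) - a k)) <= u k + v k).
      rewrite Rabs_Rabsolu. pose proof (v_ge0 k).
      assert (0 <= u k) by (apply Rmult_le_pos; [apply h_incr | pose proof (b_decr k); lra]).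
      replace (a (S k) - a k) with (v k - u k) by (unfold a, u, v; ring).
      apply Rabs_le. lra.
    + now apply (ex_series_plus (V := R_NormedModule)).
Qed.

End AlternatingMonotoneProduct.

(** * Convergence of the harmonic alternating sums *)

Definition inv_denom (i t r k : nat) : R := / (INR (S k) ^ i * (INR (S k) + INR r) ^ t).

Lemma inv_denom_decr i t r k : 0 <= inv_denom i t r (S k) <= inv_denom i t r k.
Proof.
  unfold inv_denom. pose proof (pos_INR r).
  assert (Hk : 0 < INR (S k) <= INR (S (S k))) by (split; [apply lt_0_INR | apply le_INR]; lia).
  assert (0 < INR (S k) ^ i * (INR (S k) + INR r) ^ t)
    by (apply Rmult_lt_0_compat; apply pow_lt; lra).
  split; [left; apply Rinv_0_lt_compat, Rmult_lt_0_compat; apply pow_lt; lra|].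
  apply Rinv_le_contravar; [assumption|].
  apply Rmult_le_compat; try (left; apply pow_lt; lra); apply pow_incr; lra.
Qed.

Lemma inv_denom_le_inv i t r k : (1 <= i + t)%nat -> inv_denom i t r k <= / INR (S k).
Proof.
  intros Hit. unfold inv_denom. pose proof (pos_INR r).
  assert (Hk : 1 <= INR (S k)) by (apply (le_INR 1); lia).
  apply Rinv_le_contravar; [lra|].
  destruct i as [|i].
  - rewrite pow_O, Rmult_1_l. apply Rle_trans with (INR (S k) + INR r); [lra|].
    rewrite <- (pow_1 (INR (S k) + INR r)) at 1. apply Rle_pow; [lra | lia].
  - rewrite <- (Rmult_1_r (INR (S k))) at 1. rewrite <- (pow_1 (INR (S k))) at 1.
    apply Rmult_le_compat; try lra; [apply Rle_pow; [lra | lia] | apply pow_R1_Rle; lra].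
Qed.

Lemma is_lim_seq_inv_denom i t r : (1 <= i + t)%nat -> is_lim_seq (inv_denom i t r) 0.
Proof.
  intros Hit. apply (is_lim_seq_le_le (fun _ => 0) _ (fun k => / INR (S k))).
  - intros k. split; [|now apply inv_denom_le_inv].
    destruct k; [pose proof (inv_denom_decr i t r O) | pose proof (inv_denom_decr i t r k)]; lra.
  - apply is_lim_seq_const.
  - apply (is_lim_seq_incr_1 (fun n => / INR n)).
    replace (Finite 0) with (Rbar_inv p_infty) by reflexivity.
    apply is_lim_seq_inv; [apply is_lim_seq_INR | discriminate].
Qed.

(* The telescoping majorant is [c k = 2 (H_1(k+1) + 1) / (k+1)]. *)
Lemma ex_series_H1_div_sq : ex_series (fun k => H 1 (S k) / INR (S k) ^ 2).
Proof.
  apply (ex_series_le_telescoping _ (fun k => 2 * (H 1 (S k) + 1) / INR (S k))).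
  - intros k. rewrite (H1_S (S k)), (S_INR (S k)).
    pose proof (H1_ge1 k) as Hx. set (x := H 1 (S k)) in *.
    assert (Hn : 1 <= INR (S k)) by (apply (le_INR 1); lia). set (n := INR (S k)) in *.
    split; [apply Rdiv_le_0_compat; [lra | apply pow_lt; lra]|].
    assert (E : 2 * (x + 1) / n - 2 * (x + / (n + 1) + 1) / (n + 1) - x / n ^ 2
                = (x * (n * n - 1) + 2 * n) / (n ^ 2 * (n + 1) ^ 2)) by (field; lra).
    assert (0 <= (x * (n * n - 1) + 2 * n) / (n ^ 2 * (n + 1) ^ 2)).
    { apply Rdiv_le_0_compat; [|apply Rmult_lt_0_compat; apply pow_lt; lra].
      assert (0 <= x * (n * n - 1)) by (apply Rmult_le_pos; nra). lra. }
    lra.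
  - intros k. pose proof (H1_ge1 k) as Hx. apply Rdiv_le_0_compat; [lra | apply lt_0_INR; lia].
Qed.

Definition harmonic_factor (f : nat -> R) : Prop :=
  forall k, 0 <= f k <= H 1 (S k) /\ 0 <= f (S k) - f k <= / INR (S (S k)).

Lemma harmonic_factor_Hpos p : (1 <= p)%nat -> harmonic_factor (fun k => H (Z.of_nat p) (S k)).
Proof.
  intros Hp k. rewrite (Hpos_S p (S k)).
  pose proof (Hpos_ge0 p (S k)). pose proof (Hpos_le_H1 p (S k) Hp).
  pose proof (inv_pow_INR_S_bounds p (S k) Hp). lra.
Qed.

Lemma harmonic_factor_1 : harmonic_factor (fun _ => 1).
Proof.
  intros k. pose proof (H1_ge1 k) as Hx.
  assert (0 < / INR (S (S k))) by (apply Rinv_0_lt_compat, lt_0_INR; lia). lra.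
Qed.

Lemma harmonic_factor_mul_incr f g k : harmonic_factor f -> harmonic_factor g ->
  0 <= f (S k) * g (S k) - f k * g k <= 2 * H 1 (S (S k)) / INR (S (S k)).
Proof.
  intros Hf Hg.
  destruct (Hf k) as [Hf1 Hf2]. destruct (Hg k) as [Hg1 Hg2].
  destruct (Hf (S k)) as [Hf1' _]. destruct (Hg (S k)) as [Hg1' _].
  assert (HH1 : H 1 (S k) <= H 1 (S (S k))).
  { rewrite (H1_S (S k)).
    assert (Hw : 0 < / INR (S (S k))) by (apply Rinv_0_lt_compat, lt_0_INR; lia). lra. }
  replace (f (S k) * g (S k) - f k * g k)
    with ((f (S k) - f k) * g (S k) + f k * (g (S k) - g k)) by ring.
  set (w := / INR (S (S k))) in *. unfold Rdiv. fold w.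
  split; [apply Rplus_le_le_0_compat; apply Rmult_le_pos; lra|].
  assert (Hl : (f (S k) - f k) * g (S k) <= w * H 1 (S (S k))) by (apply Rmult_le_compat; lra).
  assert (Hr : f k * (g (S k) - g k) <= H 1 (S (S k)) * w) by (apply Rmult_le_compat; lra).
  lra.
Qed.

Lemma ex_series_alt_harmonic f g i t r :
  harmonic_factor f -> harmonic_factor g -> (1 <= i + t)%nat ->
  ex_series (fun k => (-1) ^ k * (f k * g k * inv_denom i t r k)).
Proof.
  intros Hf Hg Hit.
  apply (ex_series_alt_mono_product (fun k => f k * g k)).
  - intros k. pose proof (harmonic_factor_mul_incr f g k Hf Hg) as Hincr.
    destruct (Hf k) as [Hf1 _]. destruct (Hg k) as [Hg1 _].
    split; [apply Rmult_le_pos|]; lra.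
  - apply inv_denom_decr.
  - now apply is_lim_seq_inv_denom.
  - apply (@ex_series_le R_AbsRing R_CompleteNormedModule _
             (fun k => 2 * (H 1 (S (S k)) / INR (S (S k)) ^ 2))).
    2: { apply (ex_series_scal (V := R_NormedModule) 2).
         exact (proj1 (ex_series_incr_1 _) ex_series_H1_div_sq). }
    intros k. change (Rabs ((f (S k) * g (S k) - f k * g k) * inv_denom i t r (S k))
                      <= 2 * (H 1 (S (S k)) / INR (S (S k)) ^ 2)).
    pose proof (harmonic_factor_mul_incr f g k Hf Hg) as Hincr.
    pose proof (inv_denom_decr i t r (S k)) as Hd. pose proof (inv_denom_le_inv i t r (S k) Hit) as Hd'.
    rewrite Rabs_right by (apply Rle_ge, Rmult_le_pos; lra).
    apply Rle_trans with (2 * H 1 (S (S k)) / INR (S (S k)) * / INR (S (S k)));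
      [apply Rmult_le_compat; lra|].
    right. field. apply not_0_INR. lia.
Qed.

Lemma ex_series_T_term p1 p2 i t r :
  (1 <= p1)%nat -> (1 <= p2)%nat -> (1 <= i + t)%nat ->
  ex_series (T_term (Z.of_nat p1) (Z.of_nat p2) i t r).
Proof.
  intros Hp1 Hp2 Hit.
  apply (ex_series_ext (fun k =>
    (-1) ^ k * (H (Z.of_nat p1) (S k) * H (Z.of_nat p2) (S k) * inv_denom i t r k))).
  - intros k. unfold T_term, inv_denom, Rdiv. eqR. ring.
  - apply ex_series_alt_harmonic; auto using harmonic_factor_Hpos.
Qed.

Lemma ex_series_S_term p q t r :
  (1 <= p)%nat -> (1 <= q + t)%nat -> ex_series (S_term (Z.of_nat p) q t r).
Proof.
  intros Hp Hqt.
  apply (ex_series_ext (fun k => (-1) ^ k * (H (Z.of_nat p) (S k) * 1 * inv_denom q t r k))).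
  - intros k. unfold S_term, inv_denom, Rdiv. eqR. ring.
  - apply ex_series_alt_harmonic; auto using harmonic_factor_Hpos, harmonic_factor_1.
Qed.

Lemma ex_series_S_term_0 i t r : (1 <= i + t)%nat -> ex_series (S_term 0 (S i) t r).
Proof.
  intros Hit. apply (ex_series_ext (fun k => (-1) ^ k * (1 * 1 * inv_denom i t r k))).
  - intros k. unfold S_term, inv_denom. rewrite H0_INR. eqR.
    assert (Hk : 0 < INR (S k)) by (apply lt_0_INR; lia). pose proof (pos_INR r) as Hr.
    change (INR (S k) ^ S i) with (INR (S k) * INR (S k) ^ i).
    field. repeat split; try apply pow_nonzero; lra.
  - apply ex_series_alt_harmonic; auto using harmonic_factor_1.
Qed.

(** * Part (i) *)

Lemma partial_fraction_pow_shift (x c : R) m : x <> 0 -> c <> 0 -> x + c <> 0 ->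
  / (x ^ m * (x + c)) =
  sum_n_m (fun i => (-1) ^ (m - i) / c ^ (m - i + 1) * / x ^ i) 1 m
  + (-1) ^ m / c ^ m * / (x + c).
Proof.
  intros Hx Hc Hxc. induction m as [|m IH].
  - rewrite sumR_empty by lia. simpl. field. auto.
  - rewrite sumR_Sm by lia.
    rewrite (sumR_ext _ (fun i => - / c * ((-1) ^ (m - i) / c ^ (m - i + 1) * / x ^ i))).
    2: { intros i Hi. replace (S m - i)%nat with (S (m - i)) by lia. simpl.
         field. repeat split; try apply pow_nonzero; auto. }
    rewrite sumR_mult_l.
    replace (/ (x ^ S m * (x + c))) with (/ c * / x ^ S m - / c * / (x ^ m * (x + c)))
      by (simpl; field; repeat split; try apply pow_nonzero; auto).
    rewrite IH, Nat.sub_diag. simpl. field. repeat split; try apply pow_nonzero; auto.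
Qed.

Lemma alternating_recurrence (u c : nat -> R) :
  (forall j, u (S j) = c j - u j) ->
  forall r, u (S r) = (-1) ^ S r * u O + sum_n_m (fun j => (-1) ^ (r - j) * c j) 0 r.
Proof.
  intros Hu r. induction r as [|r IH].
  - rewrite sum_n_n, Hu. simpl. ring.
  - rewrite Hu, IH, sumR_Sm, Nat.sub_diag by lia.
    rewrite (sumR_ext (fun j => (-1) ^ (S r - j) * c j) (fun j => -1 * ((-1) ^ (r - j) * c j))).
    + rewrite sumR_mult_l. simpl. ring.
    + intros j Hj. replace (S r - j)%nat with (S (r - j)) by lia. simpl. ring.
Qed.

(* Shifting the summation index by one turns [H_n] into [H_(n-1) = H_n - n^(-p)]. *)
Lemma Tsum_shift p1 p2 j : (1 <= p1)%nat -> (1 <= p2)%nat ->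
  Tsum (Z.of_nat p1) (Z.of_nat p2) 0 1 (S j) =
  Ssum (Z.of_nat p1) p2 1 j + Ssum (Z.of_nat p2) p1 1 j - Ssum 0 (p1 + p2 + 1) 1 j
  - Tsum (Z.of_nat p1) (Z.of_nat p2) 0 1 j.
Proof.
  intros Hp1 Hp2.
  set (g k := - ((-1) ^ k * H (Z.of_nat p1) k * H (Z.of_nat p2) k / (INR k + INR (S j)))).
  assert (Hg : is_series g (Tsum (Z.of_nat p1) (Z.of_nat p2) 0 1 (S j))).
  { apply is_series_decr_1.
    replace (g O) with 0 by (unfold g; rewrite H_0; unfold Rdiv; ring).
    change (plus ?l (opp 0)) with (l + - 0). rewrite Ropp_0, Rplus_0_r.
    apply (is_series_ext (T_term (Z.of_nat p1) (Z.of_nat p2) 0 1 (S j))).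
    - intros k. eqR. unfold g, T_term. rewrite pow_O, pow_1.
      change ((-1) ^ S k) with (-1 * (-1) ^ k).
      assert (Hk : 0 < INR (S k)) by (apply lt_0_INR; lia). pose proof (pos_INR (S j)) as Hj.
      field. lra.
    - apply Series_correct, ex_series_T_term; lia. }
  assert (Hsum : is_series (fun k => T_term (Z.of_nat p1) (Z.of_nat p2) 0 1 j k + g k)
    (Tsum (Z.of_nat p1) (Z.of_nat p2) 0 1 j + Tsum (Z.of_nat p1) (Z.of_nat p2) 0 1 (S j))).
  { apply (is_series_plus (V := R_NormedModule)); [|exact Hg].
    apply Series_correct, ex_series_T_term; lia. }
  assert (Hsum' : is_series (fun k => T_term (Z.of_nat p1) (Z.of_nat p2) 0 1 j k + g k)
    (Ssum (Z.of_nat p1) p2 1 j + Ssum (Z.of_nat p2) p1 1 j - Ssum 0 (p1 + p2 + 1) 1 j)).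
  { apply (is_series_ext (fun k => S_term (Z.of_nat p1) p2 1 j k + S_term (Z.of_nat p2) p1 1 j k
                                   - S_term 0 (p1 + p2 + 1) 1 j k)).
    - intros k. eqR. unfold T_term, S_term, g. rewrite !Hpos_S, H0_INR, !S_INR.
      replace (p1 + p2 + 1)%nat with (S (p1 + p2)) by lia.
      change (?y ^ S (p1 + p2)) with (y * y ^ (p1 + p2)). rewrite pow_add.
      pose proof (pos_INR k) as Hk. pose proof (pos_INR j) as Hj.
      field. repeat split; try apply pow_nonzero; lra.
    - apply (is_series_minus (V := R_NormedModule));
        [apply (is_series_plus (V := R_NormedModule))|]; apply Series_correct.
      + apply ex_series_S_term; lia.
      + apply ex_series_S_term; lia.
      + replace (p1 + p2 + 1)%nat with (S (p1 + p2)) by lia. apply ex_series_S_term_0; lia. }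
  apply is_series_unique in Hsum. apply is_series_unique in Hsum'. lra.
Qed.

Lemma Tsum_shift_0 p1 p2 : Tsum (Z.of_nat p1) (Z.of_nat p2) 0 1 0 = Sppm p1 p2 1.
Proof.
  apply Series_ext. intros k. unfold T_term. simpl (INR 0). now rewrite pow_O, Rplus_0_r, Rmult_1_l.
Qed.

Lemma Ssum_shift_0 p q : Ssum (Z.of_nat p) q 1 0 = Spm p (q + 1).
Proof.
  apply Series_ext. intros k. unfold S_term. simpl (INR 0).
  now rewrite Rplus_0_r, pow_1, pow_add, pow_1.
Qed.

Lemma Ssum_0_shift_0 s : Ssum 0 s 1 0 = zetabar s.
Proof.
  apply Series_ext. intros k. unfold S_term. simpl (INR 0). rewrite H0_INR, Rplus_0_r, pow_1.
  assert (Hk : 0 < INR (S k)) by (apply lt_0_INR; lia).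
  field. split; [apply pow_nonzero|]; lra.
Qed.

Lemma Tsum_closed_form p1 p2 r : (1 <= p1)%nat -> (1 <= p2)%nat -> (1 <= r)%nat ->
  Tsum (Z.of_nat p1) (Z.of_nat p2) 0 1 r =
  (-1) ^ r * (Sppm p1 p2 1 - Spm p1 (p2 + 1) - Spm p2 (p1 + 1))
  + (-1) ^ r * zetabar (p1 + p2 + 1)
  + sum_n_m (fun j => (-1) ^ (r - j) * Ssum 0 (p1 + p2 + 1) 1 j) 1 (r - 1)
  + sum_n_m (fun j => (-1) ^ (r - 1 - j)
                      * (Ssum (Z.of_nat p1) p2 1 j + Ssum (Z.of_nat p2) p1 1 j)) 1 (r - 1).
Proof.
  intros Hp1 Hp2 Hr. destruct r as [|q]; [lia|]. replace (S q - 1)%nat with q by lia.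
  rewrite (alternating_recurrence _ (fun j => Ssum (Z.of_nat p1) p2 1 j + Ssum (Z.of_nat p2) p1 1 j
                                             - Ssum 0 (p1 + p2 + 1) 1 j))
    by (intros; now apply Tsum_shift).
  rewrite sumR_Sn by lia.
  rewrite (sumR_ext (fun j => (-1) ^ (S q - j) * _) (fun j => -1 * ((-1) ^ (q - j) * Ssum 0 (p1 + p2 + 1) 1 j))).
  2: { intros j Hj. replace (S q - j)%nat with (S (q - j)) by lia. simpl. ring. }
  rewrite sumR_mult_l, Tsum_shift_0, !Ssum_shift_0, Ssum_0_shift_0, Nat.sub_0_r.
  rewrite (sumR_ext _ (fun j => (-1) ^ (q - j) * (Ssum (Z.of_nat p1) p2 1 j + Ssum (Z.of_nat p2) p1 1 j)
                                - (-1) ^ (q - j) * Ssum 0 (p1 + p2 + 1) 1 j)) by (intros; ring).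
  rewrite sumR_minus. simpl. ring.
Qed.

Lemma is_series_T_term_partial_fraction p1 p2 r m :
  (1 <= p1)%nat -> (1 <= p2)%nat -> (1 <= r)%nat ->
  is_series (T_term (Z.of_nat p1) (Z.of_nat p2) m 1 r)
    (sum_n_m (fun i => (-1) ^ (m - i) / INR r ^ (m - i + 1) * Sppm p1 p2 i) 1 m
     + (-1) ^ m / INR r ^ m * Tsum (Z.of_nat p1) (Z.of_nat p2) 0 1 r).
Proof.
  intros Hp1 Hp2 Hr.
  set (A k := (-1) ^ k * H (Z.of_nat p1) (S k) * H (Z.of_nat p2) (S k)).
  apply (is_series_ext (fun k =>
    sum_n_m (fun i => (-1) ^ (m - i) / INR r ^ (m - i + 1) * (A k / INR (S k) ^ i)) 1 m
    + (-1) ^ m / INR r ^ m * T_term (Z.of_nat p1) (Z.of_nat p2) 0 1 r k)).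
  - intros k. eqR. unfold T_term. fold (A k).
    assert (Hx : 0 < INR (S k)) by (apply lt_0_INR; lia).
    assert (Hc : 0 < INR r) by (apply lt_0_INR; lia).
    rewrite pow_O, Rmult_1_l, pow_1. unfold Rdiv.
    rewrite (partial_fraction_pow_shift _ _ m), Rmult_plus_distr_l, <- sumR_mult_l by lra.
    f_equal; [apply sumR_ext; intros i Hi|]; unfold Rdiv; ring.
  - apply (is_series_plus (V := R_NormedModule)).
    + apply is_series_sum_n_m. intros i Hi.
      apply (is_series_scal (V := R_NormedModule)), Series_correct.
      apply (ex_series_ext (T_term (Z.of_nat p1) (Z.of_nat p2) i 0 0)).
      * intros k. eqR. unfold T_term. now rewrite pow_O, Rmult_1_r.
      * apply ex_series_T_term; lia.
    + apply (is_series_scal (V := R_NormedModule)), Series_correct, ex_series_T_term; lia.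
Qed.

Lemma scaled_Tsum_closed_form p1 p2 r m :
  (1 <= p1)%nat -> (1 <= p2)%nat -> (1 <= r)%nat ->
  (-1) ^ m / INR r ^ m * Tsum (Z.of_nat p1) (Z.of_nat p2) 0 1 r =
  (-1) ^ (m + r) / INR r ^ m * (Sppm p1 p2 1 - Spm p1 (p2 + 1) - Spm p2 (p1 + 1))
  + ((-1) ^ (m + r) / INR r ^ m * zetabar (p1 + p2 + 1)
  + (sum_n_m (fun j => (-1) ^ (r + m - j) / INR r ^ m * Ssum 0 (p1 + p2 + 1) 1 j) 1 (r - 1)
  + sum_n_m (fun j => (-1) ^ (r + m - 1 - j) / INR r ^ m
                      * (Ssum (Z.of_nat p1) p2 1 j + Ssum (Z.of_nat p2) p1 1 j)) 1 (r - 1))).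
Proof.
  intros Hp1 Hp2 Hr. rewrite Tsum_closed_form by assumption.
  set (c := (-1) ^ m / INR r ^ m).
  rewrite (sumR_ext (fun j => (-1) ^ (r + m - j) / _ * _)
                    (fun j => c * ((-1) ^ (r - j) * Ssum 0 (p1 + p2 + 1) 1 j))).
  2: { intros j Hj. unfold c. replace (r + m - j)%nat with (m + (r - j))%nat by lia.
       rewrite pow_add. unfold Rdiv. ring. }
  rewrite (sumR_ext (fun j => (-1) ^ (r + m - 1 - j) / _ * _)
                    (fun j => c * ((-1) ^ (r - 1 - j)
                              * (Ssum (Z.of_nat p1) p2 1 j + Ssum (Z.of_nat p2) p1 1 j)))).
  2: { intros j Hj. unfold c. replace (r + m - 1 - j)%nat with (m + (r - 1 - j))%nat by lia.
       rewrite pow_add. unfold Rdiv. ring. }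
  rewrite !sumR_mult_l, pow_add. unfold c, Rdiv. ring.
Qed.

Lemma is_series_T_term_pos_pos p1 p2 r m : (1 <= p1)%nat -> (1 <= p2)%nat -> (1 <= r)%nat ->
  is_series (T_term (Z.of_nat p1) (Z.of_nat p2) m 1 r)
    ( sum_n_m (fun i => (-1) ^ (m - i) / INR r ^ (m - i + 1) * Sppm p1 p2 i) 1 m
    + (-1) ^ (m + r) / INR r ^ m * (Sppm p1 p2 1 - Spm p1 (p2 + 1) - Spm p2 (p1 + 1))
    + (-1) ^ (m + r) / INR r ^ m * zetabar (p1 + p2 + 1)
    + sum_n_m (fun j => (-1) ^ (r + m - j) / INR r ^ m * Ssum 0 (p1 + p2 + 1) 1 j) 1 (r - 1)
    + sum_n_m (fun j => (-1) ^ (r + m - 1 - j) / INR r ^ m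
                        * (Ssum (Z.of_nat p1) p2 1 j + Ssum (Z.of_nat p2) p1 1 j)) 1 (r - 1)).
Proof.
  intros Hp1 Hp2 Hr.
  rewrite !Rplus_assoc, <- scaled_Tsum_closed_form by assumption.
  now apply is_series_T_term_partial_fraction.
Qed.

(** * Faulhaber's formula with the Bernoulli numbers [B_j^+] *)

Lemma Bplus_list_length n : length (Bplus_list n) = S n.
Proof. induction n as [|n IH]; [reflexivity|]. simpl. rewrite length_app, IH. simpl. lia. Qed.

Lemma nth_Bplus_list n j : (j <= n)%nat -> nth j (Bplus_list n) 0 = Bplus j.
Proof.
  induction n as [|n IH]; intros Hj.
  - now replace j with O by lia.
  - destruct (Nat.eq_dec j (S n)) as [->|Hne]; [reflexivity|].
    simpl. rewrite app_nth1 by (rewrite Bplus_list_length; lia). apply IH. lia.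
Qed.

Lemma Bplus_S k : Bplus (S k) =
  - sum_f_R0 (fun j => Binomial.C (S (S k)) j * (-1) ^ (S k - j) * Bplus j) k / INR (S (S k)).
Proof.
  unfold Bplus at 1. simpl Bplus_list.
  rewrite app_nth2; rewrite Bplus_list_length, ?Nat.sub_diag; [simpl nth|lia].
  f_equal. f_equal. apply sum_eq. intros j Hj. now rewrite nth_Bplus_list.
Qed.

Lemma binomial_C_S_n n : Binomial.C (S n) n = INR (S n).
Proof.
  unfold Binomial.C. replace (S n - n)%nat with 1%nat by lia.
  change (fact (S n)) with (S n * fact n)%nat. rewrite mult_INR. simpl (fact 1).
  pose proof (INR_fact_neq_0 n). simpl (INR 1). field. assumption.
Qed.

Lemma Bplus_recurrence n :
  sum_n_m (fun j => Binomial.C (S n) j * (-1) ^ (n - j) * Bplus j) 0 n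
  = if Nat.eqb n 0 then 1 else 0.
Proof.
  destruct n as [|k].
  - rewrite sum_n_n. eqR. simpl. rewrite C_n_0. unfold Bplus. simpl. ring.
  - rewrite sumR_Sm by lia. change (sum_n_m ?a 0 k) with (sum_n a k).
    rewrite sum_n_Reals, binomial_C_S_n, Nat.sub_diag, Bplus_S. simpl Nat.eqb. cbv iota.
    eqR. field. apply not_0_INR. lia.
Qed.

Lemma pow_sub1_diff y e : y ^ S e - (y - 1) ^ S e =
  sum_n_m (fun i => Binomial.C (S e) i * (-1) ^ (e - i) * y ^ i) 0 e.
Proof.
  replace (y - 1) with (y + -1) by ring. rewrite binomial.
  change (sum_f_R0 ?f (S e)) with (sum_f_R0 f e + f (S e)). cbv beta.
  rewrite C_n_n, Nat.sub_diag, <- sum_n_Reals.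
  rewrite (sumR_ext _ (fun i => -1 * (Binomial.C (S e) i * y ^ i * (-1) ^ (S e - i)))).
  - rewrite sumR_mult_l. change (sum_n_m ?a 0 e) with (sum_n a e). simpl (_ ^ 0). ring.
  - intros i Hi. replace (S e - i)%nat with (S (e - i)) by lia. simpl. ring.
Qed.

Lemma binomial_C_mul_comm p l i : (l + i <= p)%nat ->
  Binomial.C (S p) l * Binomial.C (S (p - l)) i = Binomial.C (S p) i * Binomial.C (S (p - i)) l.
Proof.
  intros Hli. unfold Binomial.C.
  replace (S p - l)%nat with (S (p - l)) by lia. replace (S p - i)%nat with (S (p - i)) by lia.
  replace (S (p - i) - l)%nat with (S (p - l) - i)%nat by lia.
  pose proof (INR_fact_neq_0 l). pose proof (INR_fact_neq_0 i).
  pose proof (INR_fact_neq_0 (S (p - l))). pose proof (INR_fact_neq_0 (S (p - i))).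
  pose proof (INR_fact_neq_0 (S (p - l) - i)).
  field. auto.
Qed.

Lemma sum_n_m_truncate (a : nat -> R) q p : (q <= p)%nat ->
  sum_n_m (fun i => if Nat.leb i q then a i else 0) 0 p = sum_n_m a 0 q.
Proof.
  intros Hqp. rewrite (sum_n_m_Chasles _ 0 q p) by lia.
  rewrite (sumR_ext _ a 0 q), (sumR_ext _ (fun _ => 0) (S q) p).
  - rewrite sum_n_m_const, Rmult_0_r. change (plus ?x ?y) with (x + y). eqR. ring.
  - intros i Hi. destruct (Nat.leb_spec i q); [lia | reflexivity].
  - intros i Hi. destruct (Nat.leb_spec i q); [reflexivity | lia].
Qed.

Lemma sum_triangle_swap (g : nat -> nat -> R) p :
  sum_n_m (fun l => sum_n_m (g l) 0 (p - l)) 0 p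
  = sum_n_m (fun i => sum_n_m (fun l => g l i) 0 (p - i)) 0 p.
Proof.
  set (g' l i := if Nat.leb (l + i) p then g l i else 0).
  rewrite (sumR_ext _ (fun l => sum_n_m (g' l) 0 p)).
  2: { intros l Hl. rewrite <- (sum_n_m_truncate _ (p - l) p) by lia. apply sumR_ext. intros i Hi.
       unfold g'. destruct (Nat.leb_spec (l + i) p), (Nat.leb_spec i (p - l)); lia || reflexivity. }
  rewrite (sumR_ext (fun i => sum_n_m _ 0 (p - i)) (fun i => sum_n_m (fun l => g' l i) 0 p)).
  2: { intros i Hi. rewrite <- (sum_n_m_truncate _ (p - i) p) by lia. apply sumR_ext. intros l Hl.
       unfold g'. destruct (Nat.leb_spec (l + i) p), (Nat.leb_spec l (p - i)); lia || reflexivity. }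
  apply sum_n_switch.
Qed.

Definition faulhaber (p : nat) (x : R) : R :=
  / INR (S p) * sum_n_m (fun l => Binomial.C (S p) l * Bplus l * x ^ (S p - l)) 0 p.

(* Expanding [(y-1)^(p+1-l)] and exchanging the sums, the coefficient of [y^i] is
   [C(p+1,i)] times the recurrence of [B^+] at [p-i], which vanishes unless [i = p]. *)
Lemma faulhaber_diff p y : faulhaber p y - faulhaber p (y - 1) = y ^ p.
Proof.
  unfold faulhaber. rewrite <- Rmult_minus_distr_l, <- sumR_minus.
  set (g l i := Binomial.C (S p) l * Bplus l
                * (Binomial.C (S (p - l)) i * (-1) ^ (p - l - i) * y ^ i)).
  rewrite (sumR_ext _ (fun l => sum_n_m (g l) 0 (p - l))).
  2: { intros l Hl. replace (S p - l)%nat with (S (p - l)) by lia.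
       rewrite <- Rmult_minus_distr_l, pow_sub1_diff, <- sumR_mult_l. reflexivity. }
  rewrite sum_triangle_swap.
  rewrite (sumR_ext _ (fun i => Binomial.C (S p) i * y ^ i * (if Nat.eqb (p - i) 0 then 1 else 0))).
  2: { intros i Hi. rewrite <- Bplus_recurrence, <- sumR_mult_l. apply sumR_ext. intros l Hl.
       unfold g. replace (p - l - i)%nat with (p - i - l)%nat by lia.
       transitivity (Binomial.C (S p) l * Binomial.C (S (p - l)) i
                     * (Bplus l * (-1) ^ (p - i - l) * y ^ i)); [ring|].
       rewrite binomial_C_mul_comm by lia. ring. }
  destruct p as [|p].
  - rewrite sum_n_n. simpl. rewrite C_n_0. field.
  - rewrite sumR_Sm by lia.
    rewrite (sumR_ext _ (fun _ => 0 * 0)), sumR_mult_l.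
    2: { intros i Hi. replace (Nat.eqb (S p - i) 0) with false
           by (symmetry; apply Nat.eqb_neq; lia). ring. }
    rewrite Nat.sub_diag, binomial_C_S_n. simpl Nat.eqb. cbv iota. field. apply not_0_INR. lia.
Qed.

Lemma Hneg_faulhaber p n : H (- Z.of_nat p) n = faulhaber p (INR n).
Proof.
  induction n as [|n IH].
  - rewrite H_0. unfold faulhaber. rewrite (sumR_ext _ (fun _ => 0 * 0)), sumR_mult_l.
    + simpl. ring.
    + intros l Hl. rewrite pow_i by lia. ring.
  - rewrite Hneg_S, IH. pose proof (faulhaber_diff p (INR (S n))) as Hd.
    rewrite S_INR in *. replace (INR n + 1 - 1) with (INR n) in Hd by ring. lra.
Qed.

Lemma faulhaber_div_pow p d x : x <> 0 ->
  faulhaber p x / x ^ (S p + d) =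
  / INR (S p) * sum_n_m (fun l => Binomial.C (S p) l * Bplus l / x ^ (d + l)) 0 p.
Proof.
  intros Hx. unfold faulhaber, Rdiv. rewrite Rmult_assoc, <- sumR_mult_r. f_equal.
  apply sumR_ext. intros l Hl.
  replace (S p + d)%nat with (S p - l + (d + l))%nat by lia. rewrite pow_add.
  field. split; apply pow_nonzero; assumption.
Qed.

(** * Parts (ii) and (iii) *)

Lemma is_series_T_term_pos_neg p1 p2 m r : (1 <= p1)%nat -> (p2 + 1 <= m)%nat ->
  is_series (T_term (Z.of_nat p1) (- Z.of_nat p2) m 1 r)
    (/ INR (p2 + 1) *
     sum_n_m (fun l => Binomial.C (p2 + 1) l * Bplus l
                       * Ssum (Z.of_nat p1) (m - p2 - 1 + l) 1 r) 0 p2).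
Proof.
  intros Hp1 Hm. rewrite Nat.add_1_r.
  apply (is_series_ext (fun k => / INR (S p2) * sum_n_m (fun l =>
           Binomial.C (S p2) l * Bplus l * S_term (Z.of_nat p1) (m - p2 - 1 + l) 1 r k) 0 p2)).
  - intros k. eqR. unfold T_term, S_term. rewrite Hneg_faulhaber.
    assert (Hx : 0 < INR (S k)) by (apply lt_0_INR; lia). pose proof (pos_INR r) as Hr.
    set (x := INR (S k)) in *.
    set (K := (-1) ^ k * H (Z.of_nat p1) (S k) / (x + INR r) ^ 1).
    transitivity (K * (faulhaber p2 x / x ^ (S p2 + (m - p2 - 1)))).
    + rewrite faulhaber_div_pow by lra.
      rewrite (Rmult_comm K), (Rmult_assoc (/ INR (S p2))), <- sumR_mult_r.
      f_equal. apply sumR_ext. intros l Hl. unfold K. field.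
      repeat split; try apply pow_nonzero; lra.
    + replace (S p2 + (m - p2 - 1))%nat with m by lia.
      unfold K. field. repeat split; try apply pow_nonzero; lra.
  - apply (is_series_scal (V := R_NormedModule)), is_series_sum_n_m. intros l Hl.
    apply (is_series_scal (V := R_NormedModule)), Series_correct, ex_series_S_term; lia.
Qed.

Lemma is_series_T_term_neg_neg p1 p2 m r : (p1 + p2 + 2 <= m)%nat ->
  is_series (T_term (- Z.of_nat p1) (- Z.of_nat p2) m 1 r)
    (/ (INR (p1 + 1) * INR (p2 + 1)) *
     sum_n_m (fun l1 =>
       sum_n_m (fun l2 =>
         Binomial.C (p1 + 1) l1 * Binomial.C (p2 + 1) l2 * Bplus l1 * Bplus l2
         * Ssum 0 (m - p1 - p2 - 1 + l1 + l2) 1 r) 0 p2) 0 p1).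
Proof.
  intros Hm. rewrite !Nat.add_1_r. set (d := (m - p1 - p2 - 2)%nat).
  apply (is_series_ext (fun k => / (INR (S p1) * INR (S p2)) * sum_n_m (fun l1 =>
           sum_n_m (fun l2 => Binomial.C (S p1) l1 * Binomial.C (S p2) l2 * Bplus l1 * Bplus l2
                              * S_term 0 (m - p1 - p2 - 1 + l1 + l2) 1 r k) 0 p2) 0 p1)).
  - intros k. eqR. unfold T_term, S_term. rewrite !Hneg_faulhaber, H0_INR.
    assert (Hx : 0 < INR (S k)) by (apply lt_0_INR; lia). pose proof (pos_INR r) as Hr.
    set (x := INR (S k)) in *. set (K := (-1) ^ k / (x + INR r) ^ 1).
    transitivity (K * ((faulhaber p1 x / x ^ (S p1 + 0)) * (faulhaber p2 x / x ^ (S p2 + d)))).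
    + rewrite !faulhaber_div_pow by lra.
      rewrite Rinv_mult.
      transitivity (/ INR (S p1) * / INR (S p2) * (sum_n_m (fun l1 =>
        Binomial.C (S p1) l1 * Bplus l1 / x ^ (0 + l1)) 0 p1 * (sum_n_m (fun l2 =>
        Binomial.C (S p2) l2 * Bplus l2 / x ^ (d + l2)) 0 p2 * K))); [|ring].
      f_equal. rewrite <- sumR_mult_r. apply sumR_ext. intros l1 Hl1.
      rewrite <- sumR_mult_r, <- sumR_mult_l. apply sumR_ext. intros l2 Hl2.
      replace (m - p1 - p2 - 1 + l1 + l2)%nat with (S ((0 + l1) + (d + l2))) by (unfold d; lia).
      change (x ^ S ?n) with (x * x ^ n). rewrite pow_add. unfold K.
      field. repeat split; try apply pow_nonzero; lra.
    + replace (x ^ m) with (x ^ (S p1 + 0) * x ^ (S p2 + d))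
        by (rewrite <- pow_add; f_equal; unfold d; lia).
      unfold K. field. repeat split; try apply pow_nonzero; lra.
  - apply (is_series_scal (V := R_NormedModule)), is_series_sum_n_m. intros l1 Hl1.
    apply is_series_sum_n_m. intros l2 Hl2.
    apply (is_series_scal (V := R_NormedModule)), Series_correct.
    replace (m - p1 - p2 - 1 + l1 + l2)%nat with (S (d + l1 + l2)) by (unfold d; lia).
    apply ex_series_S_term_0. lia.
Qed.

Theorem lemma10 :
  (* (i) *)
  (forall (p1 p2 r m : nat), (1 <= p1)%nat -> (1 <= p2)%nat -> (1 <= r)%nat ->
     is_series (T_term (Z.of_nat p1) (Z.of_nat p2) m 1 r)
       ( sum_n_m (fun i => (-1) ^ (m - i) / INR r ^ (m - i + 1) * Sppm p1 p2 i) 1 m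
       + (-1) ^ (m + r) / INR r ^ m
           * (Sppm p1 p2 1 - Spm p1 (p2 + 1) - Spm p2 (p1 + 1))
       + (-1) ^ (m + r) / INR r ^ m * zetabar (p1 + p2 + 1)
       + sum_n_m (fun j => (-1) ^ (r + m - j) / INR r ^ m
                             * Ssum 0 (p1 + p2 + 1) 1 j) 1 (r - 1)
       + sum_n_m (fun j => (-1) ^ (r + m - 1 - j) / INR r ^ m
                             * (Ssum (Z.of_nat p1) p2 1 j + Ssum (Z.of_nat p2) p1 1 j))
                 1 (r - 1) ))
  /\
  (* (ii) *)
  (forall (p1 m r p2 : nat), (1 <= p1)%nat -> (1 <= m)%nat -> (1 <= r)%nat ->
     (p2 + 1 <= m)%nat ->
     is_series (T_term (Z.of_nat p1) (- Z.of_nat p2) m 1 r)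
       (/ INR (p2 + 1) *
        sum_n_m (fun l => Binomial.C (p2 + 1) l * Bplus l
                            * Ssum (Z.of_nat p1) (m - p2 - 1 + l) 1 r) 0 p2))
  /\
  (* (iii) *)
  (forall (m r p1 p2 : nat), (1 <= m)%nat -> (1 <= r)%nat ->
     (p1 + p2 + 2 <= m)%nat ->
     is_series (T_term (- Z.of_nat p1) (- Z.of_nat p2) m 1 r)
       (/ (INR (p1 + 1) * INR (p2 + 1)) *
        sum_n_m (fun l1 =>
          sum_n_m (fun l2 =>
             Binomial.C (p1 + 1) l1 * Binomial.C (p2 + 1) l2 * Bplus l1 * Bplus l2
             * Ssum 0 (m - p1 - p2 - 1 + l1 + l2) 1 r) 0 p2) 0 p1)).
Proof.
  split; [|split].
  - exact is_series_T_term_pos_pos.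
  - intros p1 m r p2 Hp1 _ _. exact (is_series_T_term_pos_neg p1 p2 m r Hp1).
  - intros m r p1 p2 _ _. exact (is_series_T_term_neg_neg p1 p2 m r).
Qed.
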